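(* Let $b,c_1,c_2$ be positive integers and let $\alpha/\beta$ be the right lobster $\mathcal{L}^{c_1,c_2}_b$, with $c_1$, $b$, $c_2$ cells in the top, middle and bottom rows respectively. Then $$\mathrm{inv}(S^{\mathrm{col}}_{\alpha/\beta})=c_1\bigl(b+\min\{c_1,c_2\}\bigr)+\binom{b}{2}+\binom{\max\{c_1,c_2\}}{2}.$$
   Context: Rows are numbered from the bottom. The right lobster $\mathcal{L}^{c_1,c_2}_b$ is the skew diagram $\alpha/\beta$ with $\alpha=(b+1+c_2,b+1,b+1+c_1)$, $\beta=(b+1,1,b+1)$: a bottom row of $c_2$ cells in columns $b+2,\ldots,b+1+c_2$, a middle row of $b$ cells in columns $2,\ldots,b+1$, and a top row of $c_1$ cells in columns $b+2,\ldots,b+1+c_1$. $S^{\mathrm{col}}_{\alpha/\beta}$ is the filling of $\alpha/\beta$ with $1,\ldots,b+c_1+c_2$ consecutively along columns bottom to top, from the leftmost column rightward. For a tableau $T$, $\mathrm{inv}(T)$ is the number of inversions (pairs of positions $p<q$ with the $p$th letter larger than the $q$th) of its reading word, obtained by reading each row right to left, starting from the top row and moving down. *)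

From mathcomp Require Import all_boot.
Set Implicit Arguments. Unset Strict Implicit. Unset Printing Implicit Defensive.

(* A skew diagram alpha/beta is given by two sequences of row lengths,
   rows numbered from the bottom (row r = index r of the sequences, 0-based),
   columns numbered from 1.  Row r consists of the cells (r, c) with
   beta_r < c <= alpha_r. *)
Definition row_cells (al be : seq nat) (r : nat) : seq (nat * nat) :=
  [seq (r, c) | c <- iota (nth 0 be r).+1 (nth 0 al r - nth 0 be r)].

Definition skew_cells (al be : seq nat) : seq (nat * nat) :=
  flatten [seq row_cells al be r | r <- iota 0 (size al)].

(* S^col: fill consecutively with 1, 2, ... along columns, bottom to top,
   from the leftmost column rightward.  The entry of cell x is 1 + the number
   of cells preceding x in this order. *)
Definition Scol (al be : seq nat) (x : nat * nat) : nat :=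
  (count (fun y : nat * nat => (y.2 < x.2) || ((y.2 == x.2) && (y.1 < x.1)))
     (skew_cells al be)).+1.

Definition reading_word (al be : seq nat) (T : nat * nat -> nat) : seq nat :=
  flatten [seq [seq T x | x <- rev (row_cells al be r)]
          | r <- rev (iota 0 (size al))].

Definition inversions (w : seq nat) : nat :=
  \sum_(p < size w) \sum_(q < size w | p < q) (nth 0 w q < nth 0 w p).

Definition lobster_alpha (b c1 c2 : nat) : seq nat := [:: b + 1 + c2; b + 1; b + 1 + c1].
Definition lobster_beta (b : nat) : seq nat := [:: b + 1; 1; b + 1].

From mathcomp Require Import all_boot zify.

(* S^col numbers the middle row 1, ..., b, and in column b + 1 + j it puts
   b + j + min(j - 1, c1) in the bottom cell and b + j + min(j, c2) in the top
   cell.  Each row of the reading word is thus a decreasing run, contributing a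
   binomial coefficient; the top entry of column b + 1 + j exceeds all b middle
   entries and exactly min(j, c2) bottom entries, while no middle entry exceeds
   a bottom one.  Summing min(j, c2) over j <= c1 gives the closed form. *)

Lemma inversions_nil : inversions [::] = 0.
Proof. by rewrite /inversions big_ord0. Qed.

Lemma inversions_cons x w :
  inversions (x :: w) = count (fun y => y < x) w + inversions w.
Proof.
have count_nth v : \sum_(q < size v) (nth 0 v q < x) = count (fun y => y < x) v.
  by elim: v => [|y v IHv]; rewrite ?big_ord0 // big_ord_recl IHv.
rewrite /inversions /= big_ord_recl /= big_mkcond big_ord_recl /= add0n -count_nth.
congr (_ + _); apply: eq_bigr => i _.
rewrite big_mkcond big_ord_recl /= add0n [in RHS]big_mkcond; apply: eq_bigr => j _.
by rewrite /bump /= !add1n ltnS.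
Qed.

Lemma inversions_cat s t : inversions (s ++ t) =
  inversions s + inversions t + \sum_(x <- s) count (fun y => y < x) t.
Proof.
elim: s => [|x s IHs] /=; first by rewrite big_nil inversions_nil addn0.
rewrite !inversions_cons IHs big_cons count_cat; lia.
Qed.

Lemma inversions_rev_sorted s : sorted ltn s -> inversions (rev s) = 'C(size s, 2).
Proof.
elim: s => [|x s IHs]; first by rewrite inversions_nil.
rewrite /= (path_sortedE ltn_trans) => /andP[/allP x_lt_s s_sorted].
rewrite rev_cons -cats1 inversions_cat IHs // inversions_cons inversions_nil big_rev.
rewrite (eq_big_seq (fun=> 1)); last by move=> y /x_lt_s /= ->.
by rewrite sum1_size binS bin1 /=; lia.
Qed.

Lemma count_ltn_iota a n m : count (fun c => c < m) (iota a n) = minn n (m - a).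
Proof. by elim: n a => [|n IHn] a /=; rewrite ?min0n // IHn; lia. Qed.

Lemma count_row_cells_before al be r x :
  count (fun y : nat * nat => (y.2 < x.2) || ((y.2 == x.2) && (y.1 < x.1)))
    (row_cells al be r)
  = minn (nth 0 al r - nth 0 be r) (x.2 + (r < x.1) - (nth 0 be r).+1).
Proof.
rewrite count_map -count_ltn_iota; apply: eq_count => c /=.
by case: (r < x.1); apply/idP/idP; lia.
Qed.

Lemma ScolE al be x : Scol al be x =
  (\sum_(0 <= r < size al)
     minn (nth 0 al r - nth 0 be r) (x.2 + (r < x.1) - (nth 0 be r).+1)).+1.
Proof.
rewrite /Scol /skew_cells count_flatten -map_comp sumnE big_map /index_iota subn0.
by congr S; apply: eq_bigr => r _; rewrite /= count_row_cells_before.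
Qed.

Lemma map_rev_row (T : nat * nat -> nat) (f : nat -> nat) r a n :
  (forall i, i < n -> T (r, a + i) = f i) ->
  [seq T x | x <- rev [seq (r, c) | c <- iota a n]] = rev [seq f i | i <- iota 0 n].
Proof.
move=> Tf; rewrite -(addn0 a) iotaDl -!map_rev -!map_comp.
by apply/eq_in_map => i; rewrite mem_rev mem_iota /= => /Tf.
Qed.

Lemma sum_minnS_bin2 n c :
  \sum_(i < n) minn c i.+1 + 'C(n, 2) + 'C(c, 2) = n * minn n c + 'C(maxn n c, 2).
Proof.
elim: n => [|n IHn]; first by rewrite big_ord0 min0n max0n.
rewrite big_ord_recr /= binS bin1.
move: (\sum_(i < n) _) IHn => S IHn.
have [le_n1_c|/ltnSE le_c_n] := leqP n.+1 c.
- by rewrite (minn_idPl (ltnW le_n1_c)) (maxn_idPr (ltnW le_n1_c)) in IHn; nia.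
- by rewrite (minn_idPr le_c_n) (maxn_idPl le_c_n) in IHn; rewrite binS bin1; nia.
Qed.

Lemma sorted_ltn_map_iota (f : nat -> nat) n :
  {homo f : i j / i < j} -> sorted ltn [seq f i | i <- iota 0 n].
Proof. by move=> f_homo; apply: homo_sorted f_homo _ (iota_ltn_sorted 0 n). Qed.

Section RightLobster.

Variables b c1 c2 : nat.

Local Notation al := (lobster_alpha b c1 c2).
Local Notation be := (lobster_beta b).

Definition Scol_lobster_bottom := [seq b + j.+1 + minn c1 j | j <- iota 0 c2].
Definition Scol_lobster_middle := [seq i.+1 | i <- iota 0 b].
Definition Scol_lobster_top := [seq b + i.+1 + minn c2 i.+1 | i <- iota 0 c1].

Lemma Scol_lobster x : Scol al be x =
  (minn c2 (x.2 + (0 < x.1) - (b + 2)) + minn b (x.2 + (1 < x.1) - 2)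
   + minn c1 (x.2 + (2 < x.1) - (b + 2))).+1.
Proof. by rewrite ScolE /= !big_nat_recl // big_geq //= !addKn addnK; lia. Qed.

Lemma reading_word_Scol_lobster : reading_word al be (Scol al be) =
  rev Scol_lobster_top ++ rev Scol_lobster_middle ++ rev Scol_lobster_bottom.
Proof.
rewrite /reading_word /= /row_cells /= cats0 !addKn addnK.
by congr (_ ++ _ ++ _); apply: map_rev_row => i lt_i; rewrite Scol_lobster /=; lia.
Qed.

Lemma count_ltn_Scol_lobster_bottom_le y :
  y <= b -> count (fun z => z < y) Scol_lobster_bottom = 0.
Proof.
move=> le_y_b; rewrite count_map.
by apply/eqP; rewrite -leqn0 leqNgt -has_count; apply/hasPn => j _ /=; lia.
Qed.

Lemma count_ltn_Scol_lobster_middle_gt x :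
  b < x -> count (fun y => y < x) Scol_lobster_middle = b.
Proof.
move=> lt_b_x; rewrite count_map -[RHS](size_iota 0) -count_predT.
by apply: eq_in_count => i; rewrite mem_iota /=; lia.
Qed.

Lemma count_ltn_Scol_lobster_top_bottom i : i < c1 ->
  count (fun y => y < b + i.+1 + minn c2 i.+1) Scol_lobster_bottom = minn c2 i.+1.
Proof.
move=> lt_i_c1; rewrite count_map [RHS](esym (count_ltn_iota 0 c2 i.+1)).
by apply: eq_in_count => j; rewrite mem_iota /= => lt_j_c2; apply/idP/idP; lia.
Qed.

Lemma inversions_Scol_lobster :
  inversions (reading_word al be (Scol al be))
  = c1 * (b + minn c1 c2) + 'C(b, 2) + 'C(maxn c1 c2, 2).
Proof.
rewrite reading_word_Scol_lobster !inversions_cat !inversions_rev_sorted;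
  try by apply: sorted_ltn_map_iota => i j; lia.
rewrite !size_map !size_iota.
rewrite !big_rev {1}/Scol_lobster_middle /Scol_lobster_top !big_map.
rewrite big1_seq => [|i]; last first.
  by rewrite mem_iota count_rev => lt_i_b; apply: count_ltn_Scol_lobster_bottom_le; lia.
rewrite (eq_big_seq (fun i => b + minn c2 i.+1)) => [|i]; last first.
  rewrite mem_iota count_cat !count_rev count_ltn_Scol_lobster_middle_gt; last lia.
  by move=> lt_i_c1; rewrite count_ltn_Scol_lobster_top_bottom.
have -> : iota 0 c1 = index_iota 0 c1 by rewrite /index_iota subn0.
rewrite big_mkord big_split sum_nat_const card_ord.
have := sum_minnS_bin2 c1 c2; move: (\sum_(i < c1) _) => S /=; rewrite mulnDr; lia.
Qed.

End RightLobster.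

Theorem lemma5p7 (b c1 c2 : nat) :
  0 < b -> 0 < c1 -> 0 < c2 ->
  inversions (reading_word (lobster_alpha b c1 c2) (lobster_beta b)
                (Scol (lobster_alpha b c1 c2) (lobster_beta b)))
  = c1 * (b + minn c1 c2) + 'C(b, 2) + 'C(maxn c1 c2, 2).
Proof.
(* The formula also holds in the degenerate cases b = 0, c1 = 0 or c2 = 0. *)
by move=> _ _ _; apply: inversions_Scol_lobster.
Qed.
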